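(* Let $R$ be a commutative ring with unit and $M$ an $R$-module. Let $a_1,\dots,a_l\in R$, let $b\in M$ be nonzero, and put $a=\sum_{i=1}^l a_i$. The following are equivalent: (1) the equation $\sum_{i=1}^l a_i m_i=b$ is partition regular over $M$; (2) this equation has a constant solution in $M$, i.e. there is $m\in M$ with $\sum_{i=1}^l a_i m=b$; (3) $b\in aM$.
   Context: For a $k\times l$ matrix $\mathbf{A}$ over $R$ and $\mathbf b\in M^k$, the equation $\mathbf{A}\mathbf{m}=\mathbf b$ is partition regular over $M$ if for every $r\ge1$ and every map $\chi\colon M\to\{1,\dots,r\}$ there exists $\mathbf m=(m_1,\dots,m_l)^{\intercal}\in M^l$, not all $m_i$ zero, with $\mathbf{A}\mathbf{m}=\mathbf b$ and $\chi(m_1)=\dots=\chi(m_l)$. Here $k=1$ and $\mathbf A=(a_1,\dots,a_l)$. *)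

From mathcomp Require Import all_boot all_order all_algebra.
Set Implicit Arguments. Unset Strict Implicit. Unset Printing Implicit Defensive.
Import GRing.Theory.
Local Open Scope ring_scope.

Definition partition_regular (R : comRingType) (M : lmodType R) (l : nat)
    (a : 'I_l -> R) (b : M) : Prop :=
  forall (r : nat), (0 < r)%N -> forall chi : M -> 'I_r,
    exists m : 'I_l -> M,
      [/\ exists i, m i != 0,
          \sum_(i < l) a i *: m i = b
        & forall i j, chi (m i) = chi (m j)].

(* If b is not in aM, then, Q/Z being divisible, Zorn's lemma yields a character
   psi : M -> Q/Z that vanishes on aM but not at b.  Colour y by the cells of width
   1/K containing the values psi (a_i y).  For a monochromatic solution m the sums
   sum_i psi (a_i m_i) = psi b and sum_i psi (a_i m_i0) = psi (a m_i0) = 0 differ by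
   at most l/K modulo Z, which is impossible once K > l * denq (psi b).  Conversely
   a constant solution is monochromatic, and nonzero because b is. *)

From mathcomp Require Import all_boot all_order all_algebra.
From mathcomp Require Import boolp classical_sets ring lra.
Set Implicit Arguments. Unset Strict Implicit. Unset Printing Implicit Defensive.
Import Order.TTheory GRing.Theory Num.Theory.
Local Open Scope ring_scope.

Lemma nonint_itv01 (q : rat) : 0 < q < 1 -> q \isn't a Num.int.
Proof.
case/andP=> q_gt0 q_lt1; apply/negP=> /intrP[z q_z].
by move: q_gt0 q_lt1; rewrite q_z ltr0z ltrz1; case: z {q_z} => [[|n]|n].
Qed.

Lemma denq_norm_ge1 (q X : rat) :
  q \isn't a Num.int -> q - X \is a Num.int -> 1 <= `|X| * (denq q)%:~R.
Proof.
move=> q_nonint qX_int.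
have XdZ : X * (denq q)%:~R \is a Num.int.
  have -> : X * (denq q)%:~R = (numq q)%:~R - (q - X) * (denq q)%:~R.
    by rewrite numqE; ring.
  by rewrite rpredB ?rpredM ?intr_int.
have X_neq0 : X != 0 by apply: contraNneq q_nonint => X0; rewrite -[q]subr0 -X0.
have d_gt0 : 0 < (denq q)%:~R :> rat by rewrite ltr0z denq_gt0.
have := norm_intr_ge1 XdZ (mulf_neq0 X_neq0 (lt0r_neq0 d_gt0)).
by rewrite normrM (gtr0_norm d_gt0).
Qed.

Lemma nonint_dist_int_gt (l : nat) (q X : rat) :
  q \isn't a Num.int -> q - X \is a Num.int -> l%:R < `|X| * (l * `|denq q|).+1%:R.
Proof.
move=> q_nonint qX_int; have Xd := denq_norm_ge1 q_nonint qX_int.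
rewrite -addn1 natrD natrM natr_absz (gtr0_norm (denq_gt0 _)).
have X_gt0 : 0 < `|X|.
  by rewrite normr_gt0; apply: contraTneq Xd => ->; rewrite normr0 mul0r ler10.
have := ler_wpM2l (ler0n _ l) Xd; lra.
Qed.

Section CharactersModZ.
Variable M : zmodType.
Implicit Types (D : set M) (f : M -> rat) (x y : M).

Definition subgroup_closed D :=
  [/\ D 0, forall x y, D x -> D y -> D (x + y) & forall x, D x -> D (- x)].

(* A character D -> Q/Z is represented by a rational-valued map additive modulo Z. *)
Definition additive_modZ D f :=
  forall x y, D x -> D y -> f (x + y) - f x - f y \is a Num.int.

Definition partial_char D f := subgroup_closed D /\ additive_modZ D f.

Definition extends D f D' f' := forall y, D y -> D' y /\ f' y = f y.

Lemma extends_refl D f : extends D f D f.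
Proof. by []. Qed.

Lemma extends_trans D1 f1 D2 f2 D3 f3 :
  extends D1 f1 D2 f2 -> extends D2 f2 D3 f3 -> extends D1 f1 D3 f3.
Proof.
by move=> ext12 ext23 y /ext12[/ext23[D3y <-] <-].
Qed.

Lemma additive_modZ0 D f : additive_modZ D f -> D 0 -> f 0 \is a Num.int.
Proof. by move=> fD D0; have := fD 0 0 D0 D0; rewrite addr0 subrr sub0r rpredN. Qed.

Lemma partial_charN D f x : partial_char D f -> D x -> f (- x) + f x \is a Num.int.
Proof.
move=> [[D0 _ DN] fD] Dx; have := fD _ _ (DN _ Dx) Dx; rewrite addNr => f_Nx.
have -> : f (- x) + f x = f 0 - (f 0 - f (- x) - f x) by ring.
by rewrite rpredB // (additive_modZ0 fD D0).
Qed.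

Lemma subgroup_mulz D x k : subgroup_closed D -> D x -> D (x *~ k).
Proof.
move=> [D0 DD DN] Dx.
have Dn n : D (x *+ n) by elim: n => [|n IHn]; rewrite ?mulr0n ?mulrS //; apply: DD.
by case: k => n; rewrite ?NegzE ?mulrNz; [apply: Dn | apply/DN/Dn].
Qed.

Lemma partial_char_mulz D f x k :
  partial_char D f -> D x -> f (x *~ k) - k%:~R * f x \is a Num.int.
Proof.
move=> Df Dx; have [DG fD] := Df.
have fn n : f (x *+ n) - n%:R * f x \is a Num.int.
  elim: n => [|n IHn].
    by rewrite mulr0n mul0r subr0 (additive_modZ0 fD); case: DG.
  have Dn : D (x *+ n) by rewrite pmulrn; apply: subgroup_mulz.
  have -> : f (x *+ n.+1) - n.+1%:R * f x =
      (f (x + x *+ n) - f x - f (x *+ n)) + (f (x *+ n) - n%:R * f x).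
    by rewrite !mulrS; ring.
  by rewrite rpredD // fD.
case: k => [n|n]; first exact: fn.
have Dn : D (x *+ n.+1) by rewrite pmulrn; apply: subgroup_mulz.
rewrite NegzE !mulrNz -!pmulrn.
have -> : f (- (x *+ n.+1)) - - n.+1%:R * f x =
    (f (- (x *+ n.+1)) + f (x *+ n.+1)) - (f (x *+ n.+1) - n.+1%:R * f x) by ring.
by rewrite rpredB // (partial_charN Df).
Qed.

Lemma subgroup_multiples D x :
  subgroup_closed D -> exists n : nat, forall k : int, D (x *~ k) <-> (n %| k)%Z.
Proof.
move=> DG; have [D0 DD DN] := DG.
have [|none] := pselect (exists n, (0 < n)%N && `[< D (x *+ n) >]); last first.
  exists 0%N => k; rewrite dvd0z; split=> [|/eqP->]; last by rewrite mulr0z.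
  have Dn n : D (x *+ n.+1) -> False by move=> Dn; apply: none; exists n.+1; apply/asboolP.
  case: k => [[|n]|n] //; first by rewrite -pmulrn => /Dn.
  by rewrite NegzE mulrNz -pmulrn => /DN; rewrite opprK => /Dn.
case/ex_minnP=> n /andP[n_gt0 /asboolP Dn] n_min; exists n => k; split; last first.
  by case/dvdzP=> q ->; rewrite mulrC mulrzA -pmulrn; apply: subgroup_mulz.
move=> Dk; apply/dvdz_mod0P; set r := (k %% n)%Z.
have n_neq0 : n%:Z != 0 by rewrite eqz_nat -lt0n.
have r_ge0 : 0 <= r := modz_ge0 k n_neq0.
have r_lt : r < n by rewrite ltz_pmod // ltz_nat.
have Dr : D (x *~ r).
  have -> : r = k - (k %/ n)%Z * n by rewrite /r {2}(divz_eq k n) addrAC subrr add0r.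
  rewrite mulrzBr -mulrzA_C -pmulrn.
  by apply: DD => //; apply: DN; apply: subgroup_mulz.
move: r_ge0 r_lt Dr; case: r => [[|r]|//] // _; rewrite ltz_nat -pmulrn => r_lt Dr.
suff: (n <= r.+1)%N by rewrite leqNgt r_lt.
by apply: n_min; apply/asboolP.
Qed.

Definition compatible D f x (v : rat) :=
  forall k : int, D (x *~ k) -> f (x *~ k) - k%:~R * v \is a Num.int.

(* Divisibility of Q/Z: if [D (x *~ k)] means [n %| k], then [f (x *+ n) / n] works. *)
Lemma exists_compatible D f x : partial_char D f -> exists v, compatible D f x v.
Proof.
move=> Df; have [DG fD] := Df; have [n Dk_dvd] := subgroup_multiples x DG.
case: (posnP n) Dk_dvd => [-> | n_gt0] Dk_dvd.
  exists 0 => k /Dk_dvd; rewrite dvd0z => /eqP->.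
  by rewrite mulr0z mul0r subr0 (additive_modZ0 fD); case: DG.
have Dxn : D (x *+ n) by rewrite pmulrn Dk_dvd dvdzz.
exists (f (x *+ n) / n%:R) => k /Dk_dvd /dvdzP[q ->].
have -> : f (x *~ (q * n)) - (q * n)%:~R * (f (x *+ n) / n%:R) =
    f (x *+ n *~ q) - q%:~R * f (x *+ n).
  by rewrite -mulrzA_C -pmulrn intrM; field; rewrite pnatr_eq0 -lt0n.
exact: partial_char_mulz q Df Dxn.
Qed.

Lemma exists_nonint_compatible D x : subgroup_closed D -> ~ D x ->
  exists2 v, v \isn't a Num.int & compatible D (fun=> 0) x v.
Proof.
move=> DG nDx; have [n Dk_dvd] := subgroup_multiples x DG.
case: (posnP n) Dk_dvd => [-> | n_gt0] Dk_dvd.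
  exists (1 / 2); first by apply: nonint_itv01; lra.
  by move=> k /Dk_dvd; rewrite dvd0z => /eqP->; rewrite mul0r subr0.
have n_gt1 : (1 < n)%N.
  rewrite ltn_neqAle n_gt0 andbT; apply: contra_notN nDx => /eqP n1.
  by rewrite -[x]mulr1z Dk_dvd -n1 dvdzz.
exists n%:R^-1.
  by apply: nonint_itv01; rewrite invr_gt0 ltr0n n_gt0 invf_lt1 ?ltr1n ?ltr0n.
move=> k /Dk_dvd /dvdzP[q ->]; rewrite intrM -mulrA mulfV ?pnatr_eq0 -?lt0n //.
by rewrite mulr1 sub0r rpredN intr_int.
Qed.

Section Extension.
Variables (D : set M) (f : M -> rat) (x : M) (v : rat).
Hypotheses (Df : partial_char D f) (fxv : compatible D f x v).

Let D' y := exists p : M * int, D p.1 /\ y = p.1 + x *~ p.2.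

(* Testing [D y] first makes [f'] agree with [f] on [D] exactly, not only modulo Z. *)
Let f' y :=
  if pselect (D y) is left _ then f y
  else if pselect (D' y) is left D'y then
    let p := sval (cid D'y) in f p.1 + p.2%:~R * v
  else 0.

Lemma extension_congr d1 k1 d2 k2 : D d1 -> D d2 -> d1 + x *~ k1 = d2 + x *~ k2 ->
  (f d1 + k1%:~R * v) - (f d2 + k2%:~R * v) \is a Num.int.
Proof.
have [[_ DD DN] fD] := Df; move=> Dd1 Dd2 e.
have e' : x *~ (k2 - k1) = d1 - d2.
  by rewrite -[d1](addrK (x *~ k1)) e mulrzBr addrAC [d2 + _]addrC addrK.
have Dd12 : D (d1 - d2) by apply: DD => //; apply: DN.
have := @fxv (k2 - k1); rewrite e' => /(_ Dd12) f_d12.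
have := fD _ _ Dd2 (DD _ _ Dd1 (DN _ Dd2)); rewrite [d2 + _]addrC subrK => f_sum.
have -> : (f d1 + k1%:~R * v) - (f d2 + k2%:~R * v) =
    (f d1 - f d2 - f (d1 - d2)) + (f (d1 - d2) - (k2 - k1)%:~R * v).
  by rewrite intrB; ring.
by rewrite rpredD.
Qed.

Lemma extension_rep y d k : D d -> y = d + x *~ k ->
  f' y - (f d + k%:~R * v) \is a Num.int.
Proof.
move=> Dd y_dk; rewrite /f'; case: pselect => [Dy|nDy].
  by have := @extension_congr y 0 d k Dy Dd; rewrite mulr0z addr0 mul0r addr0; apply.
case: pselect => [D'y|[]]; last by exists (d, k).
case: (cid D'y) => -[d' k'] /= [Dd' y_d'k'].
by apply: extension_congr; rewrite // -y_d'k'.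
Qed.

Lemma partial_char_extend : exists D'' f'',
  [/\ partial_char D'' f'', extends D f D'' f'', D'' x & f'' x - v \is a Num.int].
Proof.
have [[D0 DD DN] fD] := Df; exists D', f'; split.
- split; first split.
  + by exists (0, 0); rewrite /= mulr0z addr0.
  + move=> _ _ [[d1 k1] /= [Dd1 ->]] [[d2 k2] /= [Dd2 ->]].
    by exists (d1 + d2, k1 + k2); split; [exact: DD | rewrite /= mulrzDr addrACA].
  + move=> _ [[d k] /= [Dd ->]]; exists (- d, - k); split; first exact: DN.
    by rewrite /= mulrNz opprD.
  move=> y1 y2 [[d1 k1] /= [Dd1 e1]] [[d2 k2] /= [Dd2 e2]].
  have f'1 := extension_rep Dd1 e1; have f'2 := extension_rep Dd2 e2.
  have f'12 : f' (y1 + y2) - (f (d1 + d2) + (k1 + k2)%:~R * v) \is a Num.int.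
    by apply: extension_rep; [exact: DD | rewrite e1 e2 mulrzDr addrACA].
  have -> : f' (y1 + y2) - f' y1 - f' y2 =
      (f' (y1 + y2) - (f (d1 + d2) + (k1 + k2)%:~R * v)) - (f' y1 - (f d1 + k1%:~R * v))
      - (f' y2 - (f d2 + k2%:~R * v)) + (f (d1 + d2) - f d1 - f d2).
    by rewrite intrD; ring.
  exact: rpredD (rpredB (rpredB f'12 f'1) f'2) (fD _ _ Dd1 Dd2).
- move=> y Dy; split; first by exists (y, 0); rewrite /= mulr0z addr0.
  by rewrite /f'; case: pselect.
- by exists (0, 1); rewrite /= add0r mulr1z.
have := @extension_rep x 0 1 D0; rewrite add0r mulr1z mul1r => /(_ erefl) f'x.
have -> : f' x - v = (f' x - (f 0 + v)) + f 0 by ring.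
by rewrite rpredD // (additive_modZ0 fD D0).
Qed.

End Extension.

Lemma chain_union_char (I : Type) (C : set I) (Dc : I -> set M) (fc : I -> M -> rat) i1 :
  C i1 -> (forall i, C i -> partial_char (Dc i) (fc i)) ->
  (forall i j, C i -> C j ->
     extends (Dc i) (fc i) (Dc j) (fc j) \/ extends (Dc j) (fc j) (Dc i) (fc i)) ->
  exists DU fU, partial_char DU fU /\ forall i, C i -> extends (Dc i) (fc i) DU fU.
Proof.
move=> Ci1 Cchar Cchain.
pose DU y := exists i, C i /\ Dc i y.
pose fU y := if pselect (DU y) is left DUy then fc (sval (cid DUy)) y else 0.
have fUE i y : C i -> Dc i y -> fU y = fc i y.
  move=> Ci Dy; rewrite /fU; case: pselect => [DUy|[]]; last by exists i.
  case: (cid DUy) => j /= [Cj Djy].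
  by case: (Cchain i j Ci Cj) => [/(_ y Dy)|/(_ y Djy)] [].
have common y1 y2 : DU y1 -> DU y2 -> exists i, [/\ C i, Dc i y1 & Dc i y2].
  move=> [i [Ci Dy1]] [j [Cj Dy2]].
  case: (Cchain i j Ci Cj) => [/(_ y1 Dy1)|/(_ y2 Dy2)] [Dy _].
    by exists j.
  by exists i.
exists DU, fU; split; last by move=> i Ci y Dy; split; [exists i | exact: fUE].
split; first split.
- by exists i1; split => //; have [[]] := Cchar i1 Ci1.
- move=> y1 y2 /common /[apply] -[i [Ci Dy1 Dy2]]; exists i; split => //.
  by have [[_ DD _] _] := Cchar i Ci; apply: DD.
- move=> y [i [Ci Dy]]; exists i; split => //.
  by have [[_ _ DN] _] := Cchar i Ci; apply: DN.
move=> y1 y2 /common /[apply] -[i [Ci Dy1 Dy2]]; have [[_ DD _] fD] := Cchar i Ci.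
by rewrite !(fUE i) //; [apply: fD | apply: DD].
Qed.

Lemma partial_char_total D f : partial_char D f ->
  exists psi, additive_modZ setT psi /\ forall y, D y -> psi y = f y.
Proof.
move=> Df.
pose T := {p : set M * (M -> rat) | partial_char p.1 p.2 /\ extends D f p.1 p.2}.
pose t0 : T := exist _ (D, f) (conj Df (@extends_refl D f)).
pose le (s t : T) := `[< extends (sval s).1 (sval s).2 (sval t).1 (sval t).2 >].
have [t t_max] : exists t, premaximal le t.
  apply: (ZL_preorder t0) => [s|r s u /asboolP rs /asboolP su|C C_chain].
  - exact/asboolP/extends_refl.
  - exact/asboolP/(extends_trans rs su).
  have [[t1 Ct1]|C0] := pselect (exists t, C t); last first.
    by exists t0 => s Cs; case: C0; exists s.
  have Cchar s : C s -> partial_char (sval s).1 (sval s).2 by case: (svalP s).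
  have Ctot s s' : C s -> C s' -> extends (sval s).1 (sval s).2 (sval s').1 (sval s').2
      \/ extends (sval s').1 (sval s').2 (sval s).1 (sval s).2.
    by move=> Cs Cs'; case: (C_chain s s' Cs Cs') => /asboolP; [left|right].
  have [DU [fU [DUf ext]]] := chain_union_char Ct1 Cchar Ctot.
  have extU : extends D f DU fU by apply: extends_trans (ext t1 Ct1); case: (svalP t1).
  by exists (exist _ (DU, fU) (conj DUf extU)) => s Cs; apply/asboolP/ext.
have [[DG fD] ext_t] := svalP t.
exists (sval t).2; split; last by move=> y /ext_t[].
suff Dt y : (sval t).1 y by move=> y1 y2 _ _; apply: fD.
have [v fv] := exists_compatible y (conj DG fD).
have [D' [f' [D'f' ext' D'y _]]] := partial_char_extend (conj DG fD) fv.
pose t' : T := exist _ (D', f') (conj D'f' (extends_trans ext_t ext')).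
have /asboolP back := t_max t' (asboolT ext').
by have [] := back y D'y.
Qed.

Lemma exists_separating_char D b : subgroup_closed D -> ~ D b ->
  exists psi, [/\ additive_modZ setT psi, forall y, D y -> psi y = 0
                 & psi b \isn't a Num.int].
Proof.
move=> DG nDb; have [v v_nonint bv] := exists_nonint_compatible DG nDb.
have D0 : partial_char D (fun=> 0) by split=> // x y _ _; rewrite !subr0.
have [D1 [f1 [D1f1 ext1 D1b f1b]]] := partial_char_extend D0 bv.
have [psi [psi_add psi_f1]] := partial_char_total D1f1.
exists psi; split=> //; first by move=> y /ext1[/psi_f1-> ->].
rewrite psi_f1 //; apply: contra v_nonint => f1b_int.
have -> : v = f1 b - (f1 b - v) by ring.
by rewrite rpredB.
Qed.

Lemma additive_modZ_sum psi (T : Type) (s : seq T) (F : T -> M) : additive_modZ setT psi ->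
  psi (\sum_(i <- s) F i) - \sum_(i <- s) psi (F i) \is a Num.int.
Proof.
move=> psi_add; apply: (big_rec2 (fun y z => psi y - z \is a Num.int)).
  by rewrite subr0 (additive_modZ0 psi_add).
move=> i y z _ yz; have := psi_add (F i) y I I.
have -> : psi (F i + y) - (psi (F i) + z) =
    (psi (F i + y) - psi (F i) - psi y) + (psi y - z) by ring.
by move=> ?; rewrite rpredD.
Qed.

End CharactersModZ.

Definition fracq (u : rat) : rat := u - (Num.floor u)%:~R.

Lemma fracq_itv u : 0 <= fracq u < 1.
Proof.
by have /andP[] := floor_itv u; rewrite /fracq intrD => *; apply/andP; split; lra.
Qed.

Lemma fracq_int u : u - fracq u \is a Num.int.
Proof. by rewrite /fracq opprB addrC subrK intr_int. Qed.

Definition cell (K : nat) (u : rat) : nat := `|Num.floor (K%:R * fracq u)|%N.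

Lemma cell_floor K u : cell K u = Num.floor (K%:R * fracq u) :> int.
Proof.
by rewrite /cell gez0_abs // floor_ge0 mulr_ge0 //; case/andP: (fracq_itv u).
Qed.

Lemma cell_lt K u : (0 < K)%N -> (cell K u < K)%N.
Proof.
move=> K_gt0; rewrite -ltz_nat cell_floor floor_lt_int.
by rewrite -[X in _ < X]mulr1 ltr_pM2l ?ltr0n //; case/andP: (fracq_itv u).
Qed.

Lemma cell_eq_fracq K u w : cell K u = cell K w -> `|fracq u - fracq w| * K%:R < 1.
Proof.
move=> /(congr1 Posz); rewrite !cell_floor => e.
have /andP[u1 u2] := floor_itv (K%:R * fracq u).
have /andP[w1 w2] := floor_itv (K%:R * fracq w).
rewrite e intrD in u1 u2; rewrite intrD in w2.
rewrite -[K%:R]ger0_norm // -normrM ltr_norml; apply/andP; split; lra.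
Qed.

Lemma same_cells_sum K l (u w : 'I_l -> rat) : (forall i, cell K (u i) = cell K (w i)) ->
  exists2 X, \sum_i u i - \sum_i w i - X \is a Num.int & `|X| * K%:R <= l%:R.
Proof.
move=> uw; exists (\sum_i (fracq (u i) - fracq (w i))).
  rewrite -!sumrB; apply: rpred_sum => i _.
  have -> : u i - w i - (fracq (u i) - fracq (w i)) =
      (u i - fracq (u i)) - (w i - fracq (w i)) by ring.
  by rewrite rpredB ?fracq_int.
rewrite (le_trans (ler_wpM2r _ (ler_norm_sum _ _ _))) // mulr_suml.
rewrite (le_trans (ler_sum _ (fun i _ => ltW (cell_eq_fracq (uw i))))) //.
by rewrite sumr_const card_ord.
Qed.

Section LinearEquation.
Variables (R : comRingType) (M : lmodType R) (l : nat) (a : 'I_l -> R) (b : M).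

Lemma constant_solution_partition_regular :
  b != 0 -> (exists m, \sum_(i < l) a i *: m = b) -> partition_regular a b.
Proof.
move=> b_neq0 [m sum_m] r _ chi; exists (fun=> m); split=> //.
have /existsP[i am_neq0] : [exists i, a i *: m != 0].
  apply: contraNT b_neq0 => /existsPn am0.
  by rewrite -sum_m big1 // => i _; apply/eqP/negbNE/am0.
by exists i; apply: contraNneq am_neq0 => ->; rewrite scaler0.
Qed.

Definition colour (psi : M -> rat) (K : nat) (y : M) : {ffun 'I_l -> 'I_K.+1} :=
  [ffun i => inord (cell K.+1 (psi (a i *: y)))].

Lemma monochromatic_sum_near psi K (m : 'I_l -> M) i0 : additive_modZ setT psi ->
  (forall i, colour psi K (m i) = colour psi K (m i0)) ->
  exists2 X, psi (\sum_i a i *: m i) - psi (\sum_i a i *: m i0) - X \is a Num.int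
           & `|X| * K.+1%:R <= l%:R.
Proof.
move=> psi_add mono.
have same_cells i : cell K.+1 (psi (a i *: m i)) = cell K.+1 (psi (a i *: m i0)).
  have := congr1 (fun g : {ffun 'I_l -> 'I_K.+1} => val (g i)) (mono i).
  by rewrite /= !ffunE /= !inordK ?cell_lt.
have [X sumX XK] := same_cells_sum same_cells; exists X => //.
have psi_mi := additive_modZ_sum (index_enum 'I_l) (fun i => a i *: m i) psi_add.
have psi_mi0 := additive_modZ_sum (index_enum 'I_l) (fun i => a i *: m i0) psi_add.
set u := \sum_i psi (a i *: m i) in psi_mi sumX *.
set w := \sum_i psi (a i *: m i0) in psi_mi0 sumX *.
have -> : psi (\sum_i a i *: m i) - psi (\sum_i a i *: m i0) - X =
    (psi (\sum_i a i *: m i) - u) - (psi (\sum_i a i *: m i0) - w) + (u - w - X) by ring.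
exact: rpredD (rpredB psi_mi psi_mi0) sumX.
Qed.

Lemma partition_regular_solvable :
  partition_regular a b -> exists m, b = (\sum_(i < l) a i) *: m.
Proof.
move=> PR; case: (pselect (exists m, b = (\sum_(i < l) a i) *: m)) => // no_sol; exfalso.
pose D : set M := fun y => exists m, y = (\sum_(i < l) a i) *: m.
have DG : subgroup_closed D.
  split; first by exists 0; rewrite scaler0.
  - by move=> _ _ [m1 ->] [m2 ->]; exists (m1 + m2); rewrite scalerDr.
  - by move=> _ [m ->]; exists (- m); rewrite scalerN.
have [psi [psi_add psiD psi_b]] := exists_separating_char DG no_sol.
pose K := (l * `|denq (psi b)|)%N.
have [|m [[i0 _] sum_m mono]] := PR _ _ (fun y => enum_rank (colour psi K y)).
  by apply/card_gt0P; exists (colour psi K 0).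
have [X psiX XK] :=
  monochromatic_sum_near (i0 := i0) psi_add (fun i => enum_rank_inj (mono i i0)).
have psi_am : psi ((\sum_(i < l) a i) *: m i0) = 0 by apply: psiD; exists (m i0).
rewrite sum_m -scaler_suml psi_am subr0 in psiX.
by have := nonint_dist_int_gt l psi_b psiX; rewrite ltNge XK.
Qed.

End LinearEquation.

Theorem theorem5p2 (R : comRingType) (M : lmodType R) (l : nat)
    (a : 'I_l -> R) (b : M) (hb : b != 0) :
  (partition_regular a b <-> exists m : M, \sum_(i < l) a i *: m = b) /\
  ((exists m : M, \sum_(i < l) a i *: m = b) <->
     exists m : M, b = (\sum_(i < l) a i) *: m).
Proof.
have constant_iff : (exists m : M, \sum_(i < l) a i *: m = b) <->
    exists m : M, b = (\sum_(i < l) a i) *: m.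
  split=> -[m sum_m]; exists m; first by rewrite -sum_m scaler_suml.
  by rewrite sum_m scaler_suml.
split=> //; split; last exact: constant_solution_partition_regular.
by move/partition_regular_solvable/constant_iff.
Qed.
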